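(* Let $\mathcal S$ be a non-degenerate affine zipper with signature $(0,\dots,0)$ whose matrices have dominated splitting of index-1 with multicone $M$. Then for every $\mathbf i\in\Sigma\setminus B$, $$\alpha(\pi(\mathbf i))\le\limsup_{n\to\infty}\frac{\log\|A_{\mathbf i|_n}\|}{\log\lambda_{\mathbf i|_n}}.$$
   Context: Affine zipper with signature $(0,\dots,0)$: $f_i(x)=A_ix+t_i$ ($i=0,\dots,N-1$) on $\mathbb R^d$, $A_i$ invertible, each $f_i$ a contraction, vertices $z_0,\dots,z_N$ with $f_i(z_0)=z_i$, $f_i(z_N)=z_{i+1}$; $\Gamma=\bigcup_if_i(\Gamma)$. Fix a probability vector $\lambda$ with $\lambda_i>0$; $g_i(x)=\lambda_ix+\gamma_i$, $\gamma_i=\sum_{j<i}\lambda_j$; $v:[0,1]\to\mathbb R^d$ the unique continuous function with $v(x)=f_i(v(g_i^{-1}(x)))$ for $x\in g_i([0,1])$; $\alpha(x)=\liminf_{y\to x}\frac{\log\|v(x)-v(y)\|}{\log|x-y|}$. For a word $\bar\imath=i_1\dots i_k$: $A_{\bar\imath}=A_{i_1}\cdots A_{i_k}$, $\lambda_{\bar\imath}=\lambda_{i_1}\cdots\lambda_{i_k}$, $f_{\bar\imath}=f_{i_1}\circ\cdots\circ f_{i_k}$, $\Gamma_{\bar\imath}=f_{\bar\imath}(\Gamma)$. Operator norms are Euclidean. Dominated splitting of index-1: there is a nonempty open $M\subset\mathbb{PR}^{d-1}$ (projective action; $\langle w\rangle$ the line through $w\neq0$) with finitely many components with pairwise disjoint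 closures, $\bigcup_iA_i\overline M\subset M^o$, and some hyperplane transverse to all elements of $\overline M$. $M(x)=\{y\ne x:\langle y-x\rangle\in M\}$. Non-degenerate: there is a bounded open $U$ with $f_i(U)\cap f_j(U)=\emptyset$ ($i\ne j$), $\Gamma\cap U\ne\emptyset$, and $\langle z_N-z_0\rangle\notin\bigcap_{k\ge0}\bigcap_{|\bar\imath|=k}A_{\bar\imath}^{-1}(M^c)$. Symbolic: $\Sigma=\{0,\dots,N-1\}^{\mathbb N}$, shift $\sigma$, $\mathbf i|_n=i_1\dots i_n$; $\pi(\mathbf i)=\sum_{n\ge1}\lambda_{\mathbf i|_{n-1}}\gamma_{i_n}$, $\Pi(\mathbf i)=\lim_nf_{i_1}\circ\cdots\circ f_{i_n}(0)$, so $v(\pi(\mathbf i))=\Pi(\mathbf i)$. Bad set: for $n,l,m\ge1$, $B_{n,l,m}$ is the set of $\mathbf i\in\Sigma$ with $\big(M(\Pi(\mathbf i))\setminus B_{1/n}(\Pi(\mathbf i))\big)\cap\big(\Gamma\setminus(\Gamma_{\mathbf i|_l}\cup\Gamma_{\mathbf i|_{l-1}(i_l-1)(N-1)^m}\cup\Gamma_{\mathbf i|_{l-1}(i_l+1)0^m})\big)=\emptyset$ (open ball $B_r$; $\mathbf i|_{l-1}(i_l-1)(N-1)^m$ is $i_1\dots i_{l-1}$ followed by $i_l-1$ and $m$ copies of $N-1$, similarly the other; the corresponding $\Gamma$-piece is $\emptyset$ if $i_l=0$, resp. $i_l=N-1$). Then $B=\bigcap_{n,l,m\ge1}\bigcup_{K\ge0}\bigcap_{k\ge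 K}\sigma^{-k}B_{n,l,m}$. *)

From Stdlib Require Import Reals List ClassicalEpsilon.
Open Scope R_scope.

(* Points of R^d are represented as functions nat -> R; only the
   coordinates 0..d-1 are significant (all notions below only look at
   those coordinates).  Matrices are nat -> nat -> R likewise. *)
Definition vec := nat -> R.
Definition mat := nat -> nat -> R.

Fixpoint rsum (n : nat) (f : nat -> R) : R :=
  match n with O => 0 | S n' => rsum n' f + f n' end.

Definition vadd (x y : vec) : vec := fun k => x k + y k.
Definition vsub (x y : vec) : vec := fun k => x k - y k.
Definition dot (d : nat) (x y : vec) : R := rsum d (fun k => x k * y k).
Definition norm (d : nat) (x : vec) : R := sqrt (dot d x x).
Definition veq (d : nat) (x y : vec) : Prop := forall k, (k < d)%nat -> x k = y k.

Definition matvec (d : nat) (A : mat) (x : vec) : vec :=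
  fun i => rsum d (fun k => A i k * x k).
Definition matmul (d : nat) (A B : mat) : mat :=
  fun i j => rsum d (fun k => A i k * B k j).
Definition idm : mat := fun i j => if Nat.eqb i j then 1 else 0.

Definition invertible (d : nat) (A : mat) : Prop :=
  exists B : mat, forall i j, (i < d)%nat -> (j < d)%nat ->
    matmul d A B i j = idm i j /\ matmul d B A i j = idm i j.

Definition opnorm (d : nat) (A : mat) : R :=
  epsilon (inhabits 0)
    (fun r => is_lub (fun y => exists x, norm d x <= 1 /\ y = norm d (matvec d A x)) r).

Definition contraction (d : nat) (f : vec -> vec) : Prop :=
  exists c, 0 <= c < 1 /\
    forall x y, norm d (vsub (f x) (f y)) <= c * norm d (vsub x y).

Definition faff (d : nat) (A : nat -> mat) (t : nat -> vec) (i : nat) (x : vec) : vec :=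
  vadd (matvec d (A i) x) (t i).

Definition word := list nat.
Definition matw (d : nat) (A : nat -> mat) (w : word) : mat :=
  fold_right (fun i B => matmul d (A i) B) idm w.
Definition lamw (lam : nat -> R) (w : word) : R :=
  fold_right (fun i r => lam i * r) 1 w.
Definition fw (d : nat) (A : nat -> mat) (t : nat -> vec) (w : word) (x : vec) : vec :=
  fold_right (fun i y => faff d A t i y) x w.

(* symbolic space: s n is the letter i_{n+1} *)
Definition in_Sigma (N : nat) (s : nat -> nat) : Prop := forall n, (s n < N)%nat.
Definition restr (s : nat -> nat) (n : nat) : word := map s (seq 0 n).
Definition shift (k : nat) (s : nat -> nat) : nat -> nat := fun j => s (j + k)%nat.

Definition gam (lam : nat -> R) (i : nat) : R := rsum i lam.

Definition pi_sym (lam : nat -> R) (s : nat -> nat) : R :=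
  epsilon (inhabits 0)
    (fun x => infinite_sum (fun n => lamw lam (restr s n) * gam lam (s n)) x).

Definition Pi_sym (d : nat) (A : nat -> mat) (t : nat -> vec) (s : nat -> nat) : vec :=
  epsilon (inhabits (fun _ => 0))
    (fun p => forall eps, eps > 0 -> exists n0, forall n, (n0 <= n)%nat ->
       norm d (vsub (fw d A t (restr s n) (fun _ => 0)) p) < eps).

Definition Gam (d N : nat) (A : nat -> mat) (t : nat -> vec) (p : vec) : Prop :=
  exists s, in_Sigma N s /\ veq d p (Pi_sym d A t s).
Definition Gamw (d N : nat) (A : nat -> mat) (t : nat -> vec) (w : word) (p : vec) : Prop :=
  exists q, Gam d N A t q /\ veq d p (fw d A t w q).

Definition openS (d : nat) (S : vec -> Prop) : Prop :=
  forall x, S x -> exists eps, eps > 0 /\ forall y, norm d (vsub y x) < eps -> S y.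
Definition scal (c : R) (x : vec) : vec := fun k => c * x k.

(* subsets of PR^{d-1} are represented as cones of nonzero vectors
   (unions of lines through 0, with 0 removed) *)
Definition pcone (d : nat) (S : vec -> Prop) : Prop :=
  (forall x, S x -> norm d x > 0) /\ (forall x c, S x -> c <> 0 -> S (scal c x)).
Definition popen (d : nat) (S : vec -> Prop) : Prop := pcone d S /\ openS d S.
Definition pclos (d : nat) (S : vec -> Prop) (w : vec) : Prop :=
  norm d w > 0 /\ forall eps, eps > 0 -> exists u, S u /\ norm d (vsub u w) < eps.
Definition pint (d : nat) (S : vec -> Prop) (w : vec) : Prop :=
  exists eps, eps > 0 /\ forall u, norm d (vsub u w) < eps -> S u.
Definition pconnected (d : nat) (C : vec -> Prop) : Prop :=
  ~ exists U V, popen d U /\ popen d V /\ (forall x, C x -> U x \/ V x) /\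
      (exists x, C x /\ U x) /\ (exists x, C x /\ V x) /\
      (forall x, ~ (C x /\ U x /\ V x)).

Definition dominated_splitting (d N : nat) (A : nat -> mat) (M : vec -> Prop) : Prop :=
  popen d M /\ (exists x, M x) /\
  (exists (k : nat) (C : nat -> vec -> Prop),
     (forall j, (j < k)%nat -> popen d (C j) /\ (exists x, C j x) /\ pconnected d (C j)) /\
     (forall x, M x <-> exists j, (j < k)%nat /\ C j x) /\
     (forall j j', (j < k)%nat -> (j' < k)%nat -> j <> j' ->
        forall w, ~ (pclos d (C j) w /\ pclos d (C j') w))) /\
  (forall i, (i < N)%nat -> forall w, pclos d M w -> pint d M (matvec d (A i) w)) /\
  (exists a, norm d a > 0 /\ forall w, pclos d M w -> dot d a w <> 0).

Definition Mx (d : nat) (M : vec -> Prop) (x y : vec) : Prop :=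
  ~ veq d y x /\ M (vsub y x).

Definition nondegenerate (d N : nat) (A : nat -> mat) (t : nat -> vec) (z : nat -> vec)
    (M : vec -> Prop) : Prop :=
  (exists U : vec -> Prop,
     openS d U /\ (exists R0, forall x, U x -> norm d x <= R0) /\
     (forall i j, (i < N)%nat -> (j < N)%nat -> i <> j ->
        forall x y, U x -> U y -> ~ veq d (faff d A t i x) (faff d A t j y)) /\
     (exists p, Gam d N A t p /\ U p)) /\
  (* <z_N - z_0> is not in the intersection of the A_w^{-1}(M^c) *)
  ~ veq d (z N) (z 0%nat) /\
  (exists w : word, Forall (fun i => (i < N)%nat) w /\
      M (matvec d (matw d A w) (vsub (z N) (z 0%nat)))).

Definition Bnlm (d N : nat) (A : nat -> mat) (t : nat -> vec) (M : vec -> Prop)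
    (n l m : nat) (s : nat -> nat) : Prop :=
  let P := Pi_sym d A t s in
  ~ exists y,
      (Mx d M P y /\ ~ norm d (vsub y P) < / INR n) /\
      (Gam d N A t y /\
       ~ Gamw d N A t (restr s l) y /\
       ~ ((0 < s (l - 1)%nat)%nat /\
          Gamw d N A t (restr s (l - 1) ++ (s (l - 1)%nat - 1)%nat :: repeat (N - 1)%nat m) y) /\
       ~ ((s (l - 1)%nat + 1 < N)%nat /\
          Gamw d N A t (restr s (l - 1) ++ (s (l - 1)%nat + 1)%nat :: repeat 0%nat m) y)).

Definition in_B (d N : nat) (A : nat -> mat) (t : nat -> vec) (M : vec -> Prop)
    (s : nat -> nat) : Prop :=
  forall n l m, (1 <= n)%nat -> (1 <= l)%nat -> (1 <= m)%nat ->
    exists K, forall k, (K <= k)%nat -> Bnlm d N A t M n l m (shift k s).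

(* alpha(x) <= r, where alpha(x) = liminf_{y -> x, y in [0,1]} log|v x - v y| / log|x - y|
   (the quotient is +infinity when v x = v y) *)
Definition alpha_le (d : nat) (v : R -> vec) (x r : R) : Prop :=
  forall eps delta, eps > 0 -> delta > 0 ->
    exists y, 0 <= y <= 1 /\ 0 < Rabs (y - x) < delta /\
      norm d (vsub (v x) (v y)) > 0 /\
      ln (norm d (vsub (v x) (v y))) / ln (Rabs (x - y)) < r + eps.

Definition prob_vector (N : nat) (lam : nat -> R) : Prop :=
  (forall i, (i < N)%nat -> lam i > 0) /\ rsum N lam = 1.

Definition v_continuous (d : nat) (v : R -> vec) : Prop :=
  forall x, 0 <= x <= 1 -> forall eps, eps > 0 -> exists delta, delta > 0 /\
    forall y, 0 <= y <= 1 -> Rabs (y - x) < delta -> norm d (vsub (v y) (v x)) < eps.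

Definition v_equation (d N : nat) (A : nat -> mat) (t : nat -> vec) (lam : nat -> R)
    (v : R -> vec) : Prop :=
  forall i, (i < N)%nat -> forall x, gam lam i <= x <= gam lam i + lam i ->
    veq d (v x) (faff d A t i (v ((x - gam lam i) / lam i))).

(* Write x = pi(s), w = s|_k and P = Pi(shift k s).  Since s is not in the bad set, for
   infinitely many k there is a point y = Pi(j) of the attractor in the cone M(P) with
   |y - P| >= 1/n.  The parameter x' = pi(w j) satisfies |x - x'| <= lambda_w, while
   v(x) - v(x') = A_w (P - y).  Dominated splitting makes every product A_w comparable on the
   cone M to its operator norm, ||A_w|| |q| <= K |A_w q| (through a functional transverse to
   the closure of M, and balls of uniform relative radius around the images A_i M), so
   |v(x) - v(x')| >= ||A_w|| / (K n).  As lambda_w -> 0, taking logarithms gives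
   log|v(x) - v(x')| / log|x - x'| < r + eps. *)

From Stdlib Require Import Reals List ClassicalEpsilon Lra Lia Psatz FunctionalExtensionality Classical.
Open Scope R_scope.

Lemma rsum_ext n f g : (forall k, (k < n)%nat -> f k = g k) -> rsum n f = rsum n g.
Proof.
  induction n as [|n IH]; intros H; simpl; [reflexivity|].
  rewrite IH by (intros; apply H; lia). rewrite H by lia. reflexivity.
Qed.

Lemma rsum_plus n f g : rsum n (fun k => f k + g k) = rsum n f + rsum n g.
Proof. induction n as [|n IH]; simpl; [lra|]. rewrite IH; lra. Qed.

Lemma rsum_minus n f g : rsum n (fun k => f k - g k) = rsum n f - rsum n g.
Proof. induction n as [|n IH]; simpl; [lra|]. rewrite IH; lra. Qed.

Lemma rsum_scal n c f : rsum n (fun k => c * f k) = c * rsum n f.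
Proof. induction n as [|n IH]; simpl; [lra|]. rewrite IH; lra. Qed.

Lemma rsum_zero n : rsum n (fun _ => 0) = 0.
Proof. induction n as [|n IH]; simpl; [lra|]. rewrite IH; lra. Qed.

Lemma rsum_le n f g : (forall k, (k < n)%nat -> f k <= g k) -> rsum n f <= rsum n g.
Proof.
  induction n as [|n IH]; intros H; simpl; [lra|].
  assert (rsum n f <= rsum n g) by (apply IH; intros; apply H; lia).
  assert (f n <= g n) by (apply H; lia). lra.
Qed.

Lemma rsum_nonneg n f : (forall k, (k < n)%nat -> 0 <= f k) -> 0 <= rsum n f.
Proof. intros H. rewrite <- (rsum_zero n). apply rsum_le, H. Qed.

Lemma rsum_prefix_le n m f :
  (n <= m)%nat -> (forall k, (k < m)%nat -> 0 <= f k) -> rsum n f <= rsum m f.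
Proof.
  intros Hnm Hf. induction Hnm as [|m Hnm IH]; [lra|]. simpl.
  assert (rsum n f <= rsum m f) by (apply IH; intros; apply Hf; lia).
  assert (0 <= f m) by (apply Hf; lia). lra.
Qed.

Lemma rsum_swap n m (f : nat -> nat -> R) :
  rsum n (fun i => rsum m (fun j => f i j)) = rsum m (fun j => rsum n (fun i => f i j)).
Proof.
  induction n as [|n IH]; simpl; [rewrite rsum_zero; reflexivity|].
  rewrite IH, <- rsum_plus. reflexivity.
Qed.

Lemma Rabs_rsum_le n f : Rabs (rsum n f) <= rsum n (fun k => Rabs (f k)).
Proof.
  induction n as [|n IH]; simpl; [rewrite Rabs_R0; lra|].
  eapply Rle_trans; [apply Rabs_triang|]. lra.
Qed.

Lemma Rabs_le_between x b : Rabs x <= b -> -b <= x <= b.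
Proof. unfold Rabs; destruct Rcase_abs; intros; lra. Qed.

Lemma ln_le x y : 0 < x -> x <= y -> ln x <= ln y.
Proof. intros Hx [Hxy|<-]; [left; apply ln_increasing|]; lra. Qed.

(** * Euclidean geometry of the first [d] coordinates *)

Definition vzero : vec := fun _ => 0.

Lemma veq_refl d x : veq d x x.
Proof. intros k _; reflexivity. Qed.

Lemma veq_sym d x y : veq d x y -> veq d y x.
Proof. intros H k Hk; symmetry; auto. Qed.

Lemma veq_trans d x y z : veq d x y -> veq d y z -> veq d x z.
Proof. intros H1 H2 k Hk; rewrite H1; auto. Qed.

Lemma vsub_veq d a a' b b' : veq d a a' -> veq d b b' -> veq d (vsub a b) (vsub a' b').
Proof. intros H1 H2 k Hk; unfold vsub; rewrite H1, H2; auto. Qed.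

Lemma vsub_scal c x y : vsub (scal c x) (scal c y) = scal c (vsub x y).
Proof. apply functional_extensionality; intros; unfold vsub, scal; ring. Qed.

Lemma vadd_vsub x y z : vadd (vsub x y) (vsub y z) = vsub x z.
Proof. apply functional_extensionality; intros; unfold vadd, vsub; ring. Qed.

Lemma dot_sym d x y : dot d x y = dot d y x.
Proof. unfold dot; apply rsum_ext; intros; ring. Qed.

Lemma dot_ext d x x' y y' : veq d x x' -> veq d y y' -> dot d x y = dot d x' y'.
Proof. intros H1 H2; unfold dot; apply rsum_ext; intros; rewrite H1, H2 by auto; ring. Qed.

Lemma dot_self_nonneg d x : 0 <= dot d x x.
Proof. unfold dot; apply rsum_nonneg; intros; nra. Qed.

Lemma dot_vadd_l d x y z : dot d (vadd x y) z = dot d x z + dot d y z.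
Proof. unfold dot, vadd; rewrite <- rsum_plus; apply rsum_ext; intros; ring. Qed.

Lemma dot_vsub_l d x y z : dot d (vsub x y) z = dot d x z - dot d y z.
Proof. unfold dot, vsub; rewrite <- rsum_minus; apply rsum_ext; intros; ring. Qed.

Lemma dot_scal_l d c x z : dot d (scal c x) z = c * dot d x z.
Proof. unfold dot, scal; rewrite <- rsum_scal; apply rsum_ext; intros; ring. Qed.

Lemma norm_nonneg d x : 0 <= norm d x.
Proof. apply sqrt_pos. Qed.

Lemma norm_sqr d x : norm d x * norm d x = dot d x x.
Proof. apply sqrt_sqrt, dot_self_nonneg. Qed.

Lemma norm_ext d x y : veq d x y -> norm d x = norm d y.
Proof. intros H; unfold norm; rewrite (dot_ext d x y x y); auto. Qed.

Lemma norm_zero d : norm d vzero = 0.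
Proof.
  unfold norm, dot, vzero. rewrite (rsum_ext _ _ (fun _ => 0)), rsum_zero by (intros; ring).
  apply sqrt_0.
Qed.

Lemma norm_scal d c x : norm d (scal c x) = Rabs c * norm d x.
Proof.
  unfold norm. rewrite dot_scal_l, dot_sym, dot_scal_l, <- Rmult_assoc.
  rewrite sqrt_mult_alt by nra. rewrite <- Rsqr_def, sqrt_Rsqr_abs. reflexivity.
Qed.

Lemma cauchy_schwarz d x y : Rabs (dot d x y) <= norm d x * norm d y.
Proof.
  assert (Hq : forall c, 0 <= dot d x x + 2 * c * dot d x y + c * c * dot d y y).
  { intros c. replace (dot d x x + 2 * c * dot d x y + c * c * dot d y y)
      with (dot d (vadd x (scal c y)) (vadd x (scal c y))) by
      (unfold dot, vadd, scal; rewrite <- !rsum_scal, <- !rsum_plus; apply rsum_ext; intros; ring).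
    apply dot_self_nonneg. }
  assert (Hsq : dot d x y * dot d x y <= dot d x x * dot d y y).
  { destruct (Req_dec (dot d y y) 0) as [E|E].
    - destruct (Req_dec (dot d x y) 0) as [Z|Z]; [rewrite Z, E; lra|].
      specialize (Hq (- (dot d x x + 1) / (2 * dot d x y))). rewrite E in Hq.
      replace (dot d x x + 2 * (- (dot d x x + 1) / (2 * dot d x y)) * dot d x y +
        - (dot d x x + 1) / (2 * dot d x y) * (- (dot d x x + 1) / (2 * dot d x y)) * 0)
        with (-1) in Hq by (field; exact Z). lra.
    - assert (0 < dot d y y) by (pose proof (dot_self_nonneg d y); lra).
      specialize (Hq (- dot d x y / dot d y y)).
      replace (dot d x x + 2 * (- dot d x y / dot d y y) * dot d x y +
        - dot d x y / dot d y y * (- dot d x y / dot d y y) * dot d y y)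
        with ((dot d x x * dot d y y - dot d x y * dot d x y) / dot d y y) in Hq by (field; lra).
      apply Rmult_le_compat_r with (r := dot d y y) in Hq; [|lra].
      unfold Rdiv in Hq. rewrite Rmult_assoc, Rinv_l, Rmult_0_l in Hq by lra. lra. }
  rewrite <- (norm_sqr d x), <- (norm_sqr d y) in Hsq.
  pose proof (norm_nonneg d x); pose proof (norm_nonneg d y).
  apply Rsqr_incr_0_var; [|nra]. unfold Rsqr. rewrite <- Rabs_mult, Rabs_pos_eq; nra.
Qed.

Lemma norm_triang d x y : norm d (vadd x y) <= norm d x + norm d y.
Proof.
  pose proof (norm_nonneg d x); pose proof (norm_nonneg d y).
  apply Rsqr_incr_0_var; [|lra]. unfold Rsqr.
  rewrite norm_sqr, dot_vadd_l, !(dot_sym d _ (vadd x y)), !dot_vadd_l, (dot_sym d y x).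
  pose proof (Rabs_le_between _ _ (cauchy_schwarz d x y)).
  rewrite <- (norm_sqr d x), <- (norm_sqr d y). nra.
Qed.

Lemma norm_vsub_sym d x y : norm d (vsub x y) = norm d (vsub y x).
Proof.
  replace (vsub x y) with (scal (-1) (vsub y x))
    by (apply functional_extensionality; intros; unfold vsub, scal; ring).
  rewrite norm_scal, Rabs_left by lra. ring.
Qed.

Lemma norm_vsub_triang d x y z : norm d (vsub x z) <= norm d (vsub x y) + norm d (vsub y z).
Proof. rewrite <- (vadd_vsub x y z). apply norm_triang. Qed.

Lemma norm_vsub_zero_l d x : norm d (vsub vzero x) = norm d x.
Proof.
  replace (vsub vzero x) with (scal (-1) x)
    by (apply functional_extensionality; intros; unfold vsub, vzero, scal; ring).
  rewrite norm_scal, Rabs_left by lra. ring.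
Qed.

Lemma norm_vsub_le d x y : norm d (vsub x y) <= norm d x + norm d y.
Proof.
  pose proof (norm_vsub_triang d x vzero y) as H. rewrite norm_vsub_zero_l in H.
  replace (vsub x vzero) with x in H; [exact H|].
  apply functional_extensionality; intros; unfold vsub, vzero; ring.
Qed.

Lemma norm_rev_triang d x y : Rabs (norm d x - norm d y) <= norm d (vsub x y).
Proof.
  assert (Hx : x = vadd (vsub x y) y) by (apply functional_extensionality; intros; unfold vadd, vsub; ring).
  assert (Hy : y = vadd (vsub y x) x) by (apply functional_extensionality; intros; unfold vadd, vsub; ring).
  pose proof (norm_triang d (vsub x y) y) as H1; rewrite <- Hx in H1.
  pose proof (norm_triang d (vsub y x) x) as H2; rewrite <- Hy, norm_vsub_sym in H2.
  apply Rabs_le; lra.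
Qed.

Lemma Rabs_coord_le_norm d x k : (k < d)%nat -> Rabs (x k) <= norm d x.
Proof.
  intros Hk. pose proof (norm_nonneg d x) as Hn.
  apply Rsqr_incr_0_var; [|lra]. unfold Rsqr. rewrite norm_sqr, <- Rabs_mult, Rabs_pos_eq by nra.
  unfold dot. clear Hn. induction d as [|d IH]; [lia|]. simpl.
  assert (0 <= rsum d (fun j => x j * x j)) by (apply rsum_nonneg; intros; nra).
  destruct (Nat.eq_dec k d) as [->|Hne]; [lra|].
  assert (x k * x k <= rsum d (fun j => x j * x j)) by (apply IH; lia).
  nra.
Qed.

Lemma norm_le_rsum_Rabs d x : norm d x <= rsum d (fun k => Rabs (x k)).
Proof.
  assert (Hs : 0 <= rsum d (fun k => Rabs (x k))) by (apply rsum_nonneg; intros; apply Rabs_pos).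
  apply Rsqr_incr_0_var; [|exact Hs]. unfold Rsqr. rewrite norm_sqr. unfold dot.
  clear Hs. induction d as [|d IH]; simpl; [lra|].
  assert (0 <= rsum d (fun k => Rabs (x k))) by (apply rsum_nonneg; intros; apply Rabs_pos).
  assert (Rabs (x d) * Rabs (x d) = x d * x d) by (rewrite <- Rabs_mult; apply Rabs_pos_eq; nra).
  pose proof (Rabs_pos (x d)). nra.
Qed.

Lemma norm_vsub_eq0_veq d x y : norm d (vsub x y) = 0 -> veq d x y.
Proof.
  intros H k Hk. pose proof (Rabs_coord_le_norm d (vsub x y) k Hk) as Hc.
  rewrite H in Hc. unfold vsub in Hc. pose proof (Rabs_le_between _ _ Hc). lra.
Qed.

Lemma veq_norm_vsub_eq0 d x y : veq d x y -> norm d (vsub x y) = 0.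
Proof.
  intros H. rewrite <- (norm_zero d). apply norm_ext. intros k Hk.
  unfold vsub, vzero. rewrite H by auto. ring.
Qed.

(** * Matrices and words *)

Lemma matvec_ext d A x y : veq d x y -> matvec d A x = matvec d A y.
Proof.
  intros H; apply functional_extensionality; intros i; unfold matvec.
  apply rsum_ext; intros; rewrite H; auto.
Qed.

Lemma matvec_vsub d A x y : matvec d A (vsub x y) = vsub (matvec d A x) (matvec d A y).
Proof.
  apply functional_extensionality; intros i; unfold matvec, vsub.
  rewrite <- rsum_minus; apply rsum_ext; intros; ring.
Qed.

Lemma matvec_scal d A c x : matvec d A (scal c x) = scal c (matvec d A x).
Proof.
  apply functional_extensionality; intros i; unfold matvec, scal.
  rewrite <- rsum_scal; apply rsum_ext; intros; ring.
Qed.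

Lemma matvec_zero d A : matvec d A vzero = vzero.
Proof.
  apply functional_extensionality; intros i; unfold matvec, vzero.
  rewrite (rsum_ext _ _ (fun _ => 0)), rsum_zero by (intros; ring). reflexivity.
Qed.

Lemma matvec_matmul d A B x : matvec d (matmul d A B) x = matvec d A (matvec d B x).
Proof.
  apply functional_extensionality; intros i; unfold matvec, matmul.
  transitivity (rsum d (fun j => rsum d (fun k => A i k * B k j * x j))).
  - apply rsum_ext; intros. rewrite Rmult_comm, <- rsum_scal. apply rsum_ext; intros; ring.
  - rewrite rsum_swap. apply rsum_ext; intros. rewrite <- rsum_scal. apply rsum_ext; intros; ring.
Qed.

Lemma matvec_idm d x : veq d (matvec d idm x) x.
Proof.
  intros i Hi; unfold matvec.
  assert (E : forall n, rsum n (fun k => idm i k * x k) = if Nat.ltb i n then x i else 0).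
  { induction n as [|n IH]; simpl; [destruct i; reflexivity|]. rewrite IH. unfold idm.
    destruct (Nat.eqb_spec i n), (Nat.ltb_spec i n), (Nat.ltb_spec i (S n)); subst; try lia; ring. }
  rewrite E. destruct (Nat.ltb_spec i d); [reflexivity|lia].
Qed.

Lemma matvec_matw_cons d A i w x :
  matvec d (matw d A (i :: w)) x = matvec d (A i) (matvec d (matw d A w) x).
Proof. apply matvec_matmul. Qed.

Lemma matvec_matw_app d A w1 w2 x :
  veq d (matvec d (matw d A (w1 ++ w2)) x) (matvec d (matw d A w1) (matvec d (matw d A w2) x)).
Proof.
  induction w1 as [|i w1 IH]; simpl app.
  - apply veq_sym, matvec_idm.
  - rewrite !matvec_matw_cons, (matvec_ext d (A i) _ _ IH). apply veq_refl.
Qed.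

Lemma matvec_matw_single d A i x : veq d (matvec d (matw d A (i :: nil)) x) (matvec d (A i) x).
Proof.
  rewrite matvec_matw_cons. change (matw d A nil) with idm.
  rewrite (matvec_ext d (A i) _ _ (matvec_idm d x)). apply veq_refl.
Qed.

Lemma matvec_bound d A : exists K, 0 <= K /\ forall x, norm d (matvec d A x) <= K * norm d x.
Proof.
  exists (rsum d (fun i => rsum d (fun k => Rabs (A i k)))).
  split; [apply rsum_nonneg; intros; apply rsum_nonneg; intros; apply Rabs_pos|]. intros x.
  eapply Rle_trans; [apply norm_le_rsum_Rabs|].
  rewrite Rmult_comm, <- rsum_scal. apply rsum_le; intros i Hi.
  eapply Rle_trans; [apply Rabs_rsum_le|]. rewrite <- rsum_scal. apply rsum_le; intros k Hk.
  rewrite Rabs_mult, Rmult_comm. apply Rmult_le_compat_r; [apply Rabs_pos|].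
  apply Rabs_coord_le_norm; auto.
Qed.

Lemma matvec_small d A e : 0 < e ->
  exists del, 0 < del /\ forall x, norm d x < del -> norm d (matvec d A x) < e.
Proof.
  intros He. destruct (matvec_bound d A) as [K [HK0 HK]].
  exists (e / (K + 1)). split; [apply Rdiv_lt_0_compat; lra|]. intros x Hx.
  eapply Rle_lt_trans; [apply HK|]. pose proof (norm_nonneg d x).
  apply Rle_lt_trans with ((K + 1) * norm d x); [nra|].
  apply Rmult_lt_compat_l with (r := K + 1) in Hx; [|lra].
  replace ((K + 1) * (e / (K + 1))) with e in Hx by (field; lra). exact Hx.
Qed.

Lemma opnorm_is_lub d A :
  is_lub (fun y => exists x, norm d x <= 1 /\ y = norm d (matvec d A x)) (opnorm d A).
Proof.
  unfold opnorm. apply epsilon_spec.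
  destruct (completeness (fun y => exists x, norm d x <= 1 /\ y = norm d (matvec d A x))) as [m Hm];
    [| |exists m; exact Hm].
  - destruct (matvec_bound d A) as [K [HK0 HK]]. exists K.
    intros y [x [Hx ->]]. eapply Rle_trans; [apply HK|]. pose proof (norm_nonneg d x). nra.
  - exists (norm d (matvec d A vzero)), vzero. rewrite norm_zero. split; [lra|reflexivity].
Qed.

Lemma opnorm_le d A B : (forall x, norm d x <= 1 -> norm d (matvec d A x) <= B) -> opnorm d A <= B.
Proof. intros H. apply (proj2 (opnorm_is_lub d A)). intros y [x [Hx ->]]. auto. Qed.

Lemma norm_matvec_le_opnorm d A x : norm d (matvec d A x) <= opnorm d A * norm d x.
Proof.
  assert (Hunit : forall u, norm d u <= 1 -> norm d (matvec d A u) <= opnorm d A)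
    by (intros u Hu; apply (proj1 (opnorm_is_lub d A)); exists u; auto).
  destruct (Rle_lt_dec (norm d x) 0) as [H|H].
  - assert (Hx : veq d x vzero).
    { apply norm_vsub_eq0_veq. replace (vsub x vzero) with x; [pose proof (norm_nonneg d x); lra|].
      apply functional_extensionality; intros; unfold vsub, vzero; ring. }
    rewrite (matvec_ext d A _ _ Hx), matvec_zero, norm_zero. pose proof (norm_nonneg d x).
    replace (norm d x) with 0 by lra. rewrite Rmult_0_r; lra.
  - specialize (Hunit (scal (/ norm d x) x)).
    rewrite matvec_scal, !norm_scal, Rabs_pos_eq, Rinv_l in Hunit by (try apply Rlt_le, Rinv_0_lt_compat; lra).
    specialize (Hunit (Rle_refl 1)).
    apply Rmult_le_compat_r with (r := norm d x) in Hunit; [|lra].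
    replace (/ norm d x * norm d (matvec d A x) * norm d x) with (norm d (matvec d A x)) in Hunit
      by (field; lra). exact Hunit.
Qed.

Lemma faff_vsub d A t i x y : vsub (faff d A t i x) (faff d A t i y) = matvec d (A i) (vsub x y).
Proof.
  rewrite matvec_vsub. apply functional_extensionality; intros k; unfold faff, vsub, vadd; ring.
Qed.

Lemma faff_ext d A t i x y : veq d x y -> faff d A t i x = faff d A t i y.
Proof. intros H; unfold faff; rewrite (matvec_ext d _ x y H); reflexivity. Qed.

Lemma fw_vsub d A t w x y :
  veq d (vsub (fw d A t w x) (fw d A t w y)) (matvec d (matw d A w) (vsub x y)).
Proof.
  induction w as [|i w IH]; simpl.
  - apply veq_sym, matvec_idm.
  - rewrite faff_vsub, matvec_matmul, (matvec_ext d _ _ _ IH). apply veq_refl.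
Qed.

Lemma contraction_linear_part d A t i : contraction d (faff d A t i) ->
  exists c, 0 <= c < 1 /\ forall x, norm d (matvec d (A i) x) <= c * norm d x.
Proof.
  intros [c [Hc H]]. exists c; split; auto. intros x.
  specialize (H x vzero). rewrite faff_vsub in H.
  replace (vsub x vzero) with x in H; auto.
  apply functional_extensionality; intros; unfold vsub, vzero; ring.
Qed.

Lemma finite_uniform_lt1 N (Q : nat -> R -> Prop) :
  (forall i c c', Q i c -> c <= c' -> Q i c') ->
  (forall i, (i < N)%nat -> exists c, 0 <= c < 1 /\ Q i c) ->
  exists c, 0 <= c < 1 /\ forall i, (i < N)%nat -> Q i c.
Proof.
  intros Hmono. induction N as [|N IH]; intros H.
  - exists 0; split; [lra|intros; lia].
  - destruct IH as [c1 [Hc1 H1]]; [intros; apply H; lia|].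
    destruct (H N ltac:(lia)) as [c2 [Hc2 H2]].
    exists (Rmax c1 c2). split; [split; [apply Rmax_case|apply Rmax_lub_lt]; lra|].
    intros i Hi. destruct (Nat.eq_dec i N) as [->|Hne].
    + apply (Hmono _ c2); auto. apply Rmax_r.
    + apply (Hmono _ c1); [apply H1; lia|apply Rmax_l].
Qed.

Lemma finite_uniform_pos N (Q : nat -> R -> Prop) :
  (forall i c c', Q i c -> 0 < c' <= c -> Q i c') ->
  (forall i, (i < N)%nat -> exists c, 0 < c /\ Q i c) ->
  exists c, 0 < c /\ forall i, (i < N)%nat -> Q i c.
Proof.
  intros Hmono. induction N as [|N IH]; intros H.
  - exists 1; split; [lra|intros; lia].
  - destruct IH as [c1 [Hc1 H1]]; [intros; apply H; lia|].
    destruct (H N ltac:(lia)) as [c2 [Hc2 H2]].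
    assert (Hpos : 0 < Rmin c1 c2) by (apply Rmin_glb_lt; lra).
    exists (Rmin c1 c2). split; [exact Hpos|].
    intros i Hi. destruct (Nat.eq_dec i N) as [->|Hne].
    + apply (Hmono _ c2); auto. split; [exact Hpos|apply Rmin_r].
    + apply (Hmono _ c1); [apply H1; lia|]. split; [exact Hpos|apply Rmin_l].
Qed.

Lemma uniform_contraction d N A t : (forall i, (i < N)%nat -> contraction d (faff d A t i)) ->
  exists c, 0 <= c < 1 /\
    forall i, (i < N)%nat -> forall x, norm d (matvec d (A i) x) <= c * norm d x.
Proof.
  intros H. apply finite_uniform_lt1.
  - intros i c c' Hq Hc x. eapply Rle_trans; [apply Hq|].
    apply Rmult_le_compat_r; auto. apply norm_nonneg.
  - intros i Hi. apply (contraction_linear_part d A t i (H i Hi)).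
Qed.

Lemma linear_parts_nonexpanding d N A t : (forall i, (i < N)%nat -> contraction d (faff d A t i)) ->
  forall i, (i < N)%nat -> forall x, norm d (matvec d (A i) x) <= norm d x.
Proof.
  intros H i Hi x. destruct (contraction_linear_part d A t i (H i Hi)) as [c [Hc HcA]].
  eapply Rle_trans; [apply HcA|]. pose proof (norm_nonneg d x). nra.
Qed.

Lemma norm_matw_le d N A c : 0 <= c ->
  (forall i, (i < N)%nat -> forall x, norm d (matvec d (A i) x) <= c * norm d x) ->
  forall w, Forall (fun i => (i < N)%nat) w -> forall x,
  norm d (matvec d (matw d A w) x) <= c ^ length w * norm d x.
Proof.
  intros Hc H w Hw. induction Hw as [|i w Hi Hw IH]; intros x; simpl.
  - rewrite (norm_ext d _ x (matvec_idm d x)). lra.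
  - rewrite matvec_matmul. eapply Rle_trans; [apply H; auto|]. rewrite Rmult_assoc.
    apply Rmult_le_compat_l; auto.
Qed.

Lemma opnorm_matw_le_1 d N A :
  (forall i, (i < N)%nat -> forall x, norm d (matvec d (A i) x) <= norm d x) ->
  forall w, Forall (fun i => (i < N)%nat) w -> opnorm d (matw d A w) <= 1.
Proof.
  intros H w Hw. apply opnorm_le. intros u Hu.
  eapply Rle_trans; [apply (norm_matw_le d N A 1); [lra| |exact Hw]|].
  - intros i Hi x. rewrite Rmult_1_l. auto.
  - rewrite pow1. lra.
Qed.

(** * The coding maps *)

Lemma restr_Forall N s n : in_Sigma N s -> Forall (fun i => (i < N)%nat) (restr s n).
Proof.
  intros H. apply Forall_forall. intros x Hx. unfold restr in Hx.
  apply in_map_iff in Hx. destruct Hx as [k [<- _]]. apply H.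
Qed.

Lemma restr_length s n : length (restr s n) = n.
Proof. unfold restr. rewrite length_map, length_seq. reflexivity. Qed.

Lemma restr_S s n : restr s (S n) = s 0%nat :: restr (shift 1 s) n.
Proof.
  unfold restr, shift. simpl. f_equal. rewrite <- seq_shift, map_map.
  apply map_ext; intros; f_equal; lia.
Qed.


Lemma shift_0 s : shift 0 s = s.
Proof. apply functional_extensionality; intros j; unfold shift; f_equal; lia. Qed.

Lemma shift_shift k s : shift k (shift 1 s) = shift (S k) s.
Proof. apply functional_extensionality; intros j; unfold shift; f_equal; lia. Qed.

Lemma in_Sigma_shift N s k : in_Sigma N s -> in_Sigma N (shift k s).
Proof. intros H j; apply H. Qed.

Lemma lam_pos N lam : prob_vector N lam -> forall i, (i < N)%nat -> 0 < lam i.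
Proof. intros [Hp _] i Hi; apply Hp; auto. Qed.

Lemma gam_bounds N lam : prob_vector N lam -> forall i, (i < N)%nat ->
  0 <= gam lam i /\ gam lam i + lam i <= 1.
Proof.
  intros [Hp Hs] i Hi. unfold gam. split.
  - apply rsum_nonneg; intros; left; apply Hp; lia.
  - change (rsum i lam + lam i) with (rsum (S i) lam). rewrite <- Hs.
    apply rsum_prefix_le; [lia|]. intros; left; apply Hp; auto.
Qed.

Lemma lam_lt_1 N lam : prob_vector N lam -> (2 <= N)%nat -> forall i, (i < N)%nat -> lam i < 1.
Proof.
  intros H HN [|i] Hi.
  - destruct (gam_bounds N lam H 1%nat ltac:(lia)). pose proof (lam_pos N lam H 1%nat ltac:(lia)).
    unfold gam in *. simpl in *. lra.
  - destruct (gam_bounds N lam H (S i) Hi). pose proof (lam_pos N lam H 0%nat ltac:(lia)).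
    assert (lam 0%nat <= gam lam (S i)).
    { unfold gam. replace (lam 0%nat) with (rsum 1 lam) by (simpl; ring).
      apply rsum_prefix_le; [lia|]. intros; left; apply (lam_pos N lam H); lia. }
    lra.
Qed.

Lemma lamw_bounds N lam : prob_vector N lam -> forall w, Forall (fun i => (i < N)%nat) w ->
  0 < lamw lam w <= 1.
Proof.
  intros H w Hw. induction Hw as [|i w Hi Hw IH]; simpl; [lra|].
  pose proof (gam_bounds N lam H i Hi). pose proof (lam_pos N lam H i Hi). nra.
Qed.

Lemma lamw_le_pow N lam L : prob_vector N lam -> (forall i, (i < N)%nat -> lam i <= L) ->
  forall w, Forall (fun i => (i < N)%nat) w -> lamw lam w <= L ^ length w.
Proof.
  intros H HL w Hw. induction Hw as [|i w Hi Hw IH]; simpl; [lra|].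
  pose proof (lamw_bounds N lam H w Hw). pose proof (lam_pos N lam H i Hi).
  apply Rmult_le_compat; auto; lra.
Qed.

Lemma lamw_restr_uniformly_small N lam : prob_vector N lam -> (2 <= N)%nat ->
  forall theta, 0 < theta -> exists K0, forall k s, (K0 <= k)%nat -> in_Sigma N s ->
  lamw lam (restr s k) < theta.
Proof.
  intros H HN theta Htheta.
  destruct (finite_uniform_lt1 N (fun i c => lam i <= c)) as [L [HL HLb]].
  - intros; lra.
  - intros i Hi. exists (lam i).
    pose proof (lam_pos N lam H i Hi); pose proof (lam_lt_1 N lam H HN i Hi); split; lra.
  - destruct (pow_lt_1_zero L ltac:(rewrite Rabs_pos_eq; lra) theta Htheta) as [K0 HK0].
    exists K0. intros k s Hk Hs.
    eapply Rle_lt_trans; [apply (lamw_le_pow N lam L H HLb), restr_Forall, Hs|].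
    rewrite restr_length. specialize (HK0 k Hk). rewrite Rabs_pos_eq in HK0 by (apply pow_le; lra).
    exact HK0.
Qed.

Fixpoint pi_partial (lam : nat -> R) (n : nat) (s : nat -> nat) : R :=
  match n with
  | O => 0
  | S n => gam lam (s 0%nat) + lam (s 0%nat) * pi_partial lam n (shift 1 s)
  end.

Lemma pi_partial_S_r lam n s :
  pi_partial lam (S n) s = pi_partial lam n s + lamw lam (restr s n) * gam lam (s n).
Proof.
  revert s; induction n as [|n IH]; intros s; [simpl; ring|].
  change (pi_partial lam (S (S n)) s)
    with (gam lam (s 0%nat) + lam (s 0%nat) * pi_partial lam (S n) (shift 1 s)).
  rewrite IH, restr_S. simpl. replace (shift 1 s n) with (s (S n)) by (unfold shift; f_equal; lia).
  ring.
Qed.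

Lemma pi_partial_ext lam k s s' :
  (forall m, (m < k)%nat -> s m = s' m) -> pi_partial lam k s = pi_partial lam k s'.
Proof.
  revert s s'; induction k as [|k IH]; intros s s' H; simpl; auto.
  rewrite (H 0%nat) by lia.
  rewrite (IH (shift 1 s) (shift 1 s')) by (unfold shift; intros; apply H; lia).
  reflexivity.
Qed.

Lemma pi_partial_bounds N lam : prob_vector N lam -> forall n s, in_Sigma N s ->
  0 <= pi_partial lam n s /\ pi_partial lam n s + lamw lam (restr s n) <= 1.
Proof.
  intros H n. induction n as [|n IH]; intros s Hs; [simpl; lra|].
  simpl pi_partial. rewrite restr_S. simpl lamw.
  destruct (IH (shift 1 s) (in_Sigma_shift N s 1 Hs)).
  pose proof (gam_bounds N lam H (s 0%nat) (Hs 0%nat)).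
  pose proof (lam_pos N lam H (s 0%nat) (Hs 0%nat)). nra.
Qed.

Lemma pi_partial_cv N lam : prob_vector N lam -> forall s, in_Sigma N s ->
  Un_cv (fun n => pi_partial lam n s) (pi_sym lam s).
Proof.
  intros H s Hs.
  assert (Hgrow : Un_growing (fun n => pi_partial lam n s)).
  { intros n. rewrite pi_partial_S_r.
    pose proof (lamw_bounds N lam H (restr s n) (restr_Forall N s n Hs)).
    pose proof (gam_bounds N lam H (s n) (Hs n)). nra. }
  destruct (growing_cv _ Hgrow) as [l Hl].
  { exists 1. intros x [i ->]. pose proof (pi_partial_bounds N lam H i s Hs).
    pose proof (lamw_bounds N lam H (restr s i) (restr_Forall N s i Hs)). lra. }
  assert (Hsum : forall n, sum_f_R0 (fun m => lamw lam (restr s m) * gam lam (s m)) n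
                           = pi_partial lam (S n) s).
  { induction n as [|n IH]; [simpl; ring|]. simpl sum_f_R0. rewrite IH, (pi_partial_S_r lam (S n)).
    reflexivity. }
  assert (Hinf : infinite_sum (fun n => lamw lam (restr s n) * gam lam (s n)) l).
  { intros eps Heps. destruct (Hl eps Heps) as [n0 Hn0]. exists n0. intros n Hn.
    rewrite Hsum. apply Hn0. lia. }
  assert (Hpi : infinite_sum (fun n => lamw lam (restr s n) * gam lam (s n)) (pi_sym lam s))
    by (unfold pi_sym; apply epsilon_spec; exists l; exact Hinf).
  rewrite (uniqueness_sum _ _ _ Hpi Hinf). exact Hl.
Qed.

Lemma Un_cv_const c : Un_cv (fun _ => c) c.
Proof. intros eps Heps. exists 0%nat. intros. unfold Rdist. rewrite Rminus_diag, Rabs_R0. exact Heps. Qed.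

Lemma pi_range N lam : prob_vector N lam -> forall s, in_Sigma N s -> 0 <= pi_sym lam s <= 1.
Proof.
  intros H s Hs. pose proof (pi_partial_cv N lam H s Hs) as Hcv.
  split; [eapply Rle_cv_lim; [|apply Un_cv_const|exact Hcv]
         |eapply Rle_cv_lim; [|exact Hcv|apply Un_cv_const]];
    intros n; pose proof (pi_partial_bounds N lam H n s Hs);
    pose proof (lamw_bounds N lam H (restr s n) (restr_Forall N s n Hs)); lra.
Qed.

Lemma pi_step N lam : prob_vector N lam -> forall s, in_Sigma N s ->
  pi_sym lam s = gam lam (s 0%nat) + lam (s 0%nat) * pi_sym lam (shift 1 s).
Proof.
  intros H s Hs. apply (UL_sequence (fun n => pi_partial lam (n + 1) s)).
  - apply (CV_shift' (fun n => pi_partial lam n s)), (pi_partial_cv N lam H s Hs).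
  - eapply Un_cv_ext; [|apply CV_plus; [apply Un_cv_const|apply CV_mult; [apply Un_cv_const|]]].
    + intros n. rewrite Nat.add_1_r. reflexivity.
    + apply (pi_partial_cv N lam H), in_Sigma_shift, Hs.
Qed.

Lemma pi_iter N lam : prob_vector N lam -> forall k s, in_Sigma N s ->
  pi_sym lam s = pi_partial lam k s + lamw lam (restr s k) * pi_sym lam (shift k s).
Proof.
  intros H k. induction k as [|k IH]; intros s Hs.
  - rewrite shift_0. simpl; ring.
  - rewrite (pi_step N lam H s Hs), (IH (shift 1 s) (in_Sigma_shift N s 1 Hs)).
    rewrite shift_shift, restr_S. simpl. ring.
Qed.

Definition cat_seq (k : nat) (s j : nat -> nat) : nat -> nat :=
  fun n => if Nat.ltb n k then s n else j (n - k)%nat.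

Lemma in_Sigma_cat_seq N k s j : in_Sigma N s -> in_Sigma N j -> in_Sigma N (cat_seq k s j).
Proof. intros H1 H2 n; unfold cat_seq; destruct (Nat.ltb n k); auto. Qed.

Lemma restr_cat_seq k s j : restr (cat_seq k s j) k = restr s k.
Proof.
  unfold restr. apply map_ext_in. intros a Ha. apply in_seq in Ha. unfold cat_seq.
  destruct (Nat.ltb_spec a k); [reflexivity|lia].
Qed.

Lemma shift_cat_seq k s j : shift k (cat_seq k s j) = j.
Proof.
  apply functional_extensionality; intros n; unfold shift, cat_seq.
  destruct (Nat.ltb_spec (n + k) k); [lia|]. f_equal; lia.
Qed.

Lemma Rabs_pi_sub_pi_cat_seq N lam : prob_vector N lam -> forall k s j, in_Sigma N s -> in_Sigma N j ->
  Rabs (pi_sym lam s - pi_sym lam (cat_seq k s j)) <= lamw lam (restr s k).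
Proof.
  intros H k s j Hs Hj.
  rewrite (pi_iter N lam H k s Hs), (pi_iter N lam H k (cat_seq k s j)) by (apply in_Sigma_cat_seq; auto).
  rewrite restr_cat_seq, shift_cat_seq.
  rewrite (pi_partial_ext lam k (cat_seq k s j) s)
    by (intros m Hm; unfold cat_seq; destruct (Nat.ltb_spec m k); [reflexivity|lia]).
  replace (pi_partial lam k s + lamw lam (restr s k) * pi_sym lam (shift k s) -
    (pi_partial lam k s + lamw lam (restr s k) * pi_sym lam j))
    with (lamw lam (restr s k) * (pi_sym lam (shift k s) - pi_sym lam j)) by ring.
  pose proof (lamw_bounds N lam H _ (restr_Forall N s k Hs)).
  pose proof (pi_range N lam H _ (in_Sigma_shift N s k Hs)). pose proof (pi_range N lam H j Hj).
  rewrite Rabs_mult, Rabs_pos_eq by lra.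
  rewrite <- (Rmult_1_r (lamw lam (restr s k))) at 2.
  apply Rmult_le_compat_l; [lra|]. apply Rabs_le; lra.
Qed.

(** * The function [v] and the coding [Pi] *)

Definition clamp01 (x : R) : R := Rmax 0 (Rmin x 1).

Lemma clamp01_range x : 0 <= clamp01 x <= 1.
Proof. unfold clamp01, Rmax, Rmin. destruct (Rle_dec x 1); destruct Rle_dec; lra. Qed.

Lemma clamp01_id x : 0 <= x <= 1 -> clamp01 x = x.
Proof. intros H. unfold clamp01, Rmax, Rmin. destruct (Rle_dec x 1); destruct Rle_dec; lra. Qed.

Lemma clamp01_lipschitz x y : Rabs (clamp01 x - clamp01 y) <= Rabs (x - y).
Proof.
  unfold clamp01, Rmax, Rmin.
  repeat destruct Rle_dec; unfold Rabs; repeat destruct Rcase_abs; lra.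
Qed.

Lemma v_bounded d v : v_continuous d v ->
  exists Bv, forall x, 0 <= x <= 1 -> norm d (v x) <= Bv.
Proof.
  intros Hc. set (g := fun x => norm d (v (clamp01 x))).
  assert (Hg : forall c, 0 <= c <= 1 -> continuity_pt g c).
  { intros c _ eps Heps. destruct (Hc (clamp01 c) (clamp01_range c) eps Heps) as [del [Hdel Hd]].
    exists del; split; auto. intros x [_ Hx]. simpl in *. unfold R_dist in *. unfold g.
    eapply Rle_lt_trans; [apply norm_rev_triang|]. apply Hd; [apply clamp01_range|].
    eapply Rle_lt_trans; [apply clamp01_lipschitz|exact Hx]. }
  destruct (continuity_ab_maj g 0 1 ltac:(lra) Hg) as [xm [Hxm _]].
  exists (g xm). intros x Hx. specialize (Hxm x Hx). unfold g in Hxm.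
  rewrite clamp01_id in Hxm; auto.
Qed.

Lemma Pi_sym_veq_limit d A t s p :
  (forall eps, eps > 0 -> exists n0, forall n, (n0 <= n)%nat ->
     norm d (vsub (fw d A t (restr s n) vzero) p) < eps) ->
  veq d (Pi_sym d A t s) p.
Proof.
  intros Hp.
  assert (HPi : forall eps, eps > 0 -> exists n0, forall n, (n0 <= n)%nat ->
            norm d (vsub (fw d A t (restr s n) vzero) (Pi_sym d A t s)) < eps)
    by (unfold Pi_sym; apply epsilon_spec; exists p; exact Hp).
  apply norm_vsub_eq0_veq.
  set (e := norm d (vsub (Pi_sym d A t s) p)).
  pose proof (norm_nonneg d (vsub (Pi_sym d A t s) p)).
  destruct (Rle_lt_dec e 0) as [Hle|Hlt]; [unfold e in *; lra|].
  destruct (Hp (e/2) ltac:(lra)) as [n1 H1]. destruct (HPi (e/2) ltac:(lra)) as [n2 H2].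
  specialize (H1 (max n1 n2) ltac:(lia)). specialize (H2 (max n1 n2) ltac:(lia)).
  pose proof (norm_vsub_triang d (Pi_sym d A t s) (fw d A t (restr s (max n1 n2)) vzero) p) as Htri.
  rewrite norm_vsub_sym in H2. fold e in Htri. lra.
Qed.

Section Coding.

Variables (d N : nat) (A : nat -> mat) (t : nat -> vec) (lam : nat -> R) (v : R -> vec).
Hypothesis Hlam : prob_vector N lam.
Hypothesis Hveq : v_equation d N A t lam v.

Lemma v_pi_step s : in_Sigma N s ->
  veq d (v (pi_sym lam s)) (faff d A t (s 0%nat) (v (pi_sym lam (shift 1 s)))).
Proof.
  intros Hs. pose proof (pi_step N lam Hlam s Hs) as E.
  pose proof (pi_range N lam Hlam (shift 1 s) (in_Sigma_shift N s 1 Hs)).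
  pose proof (lam_pos N lam Hlam (s 0%nat) (Hs 0%nat)).
  assert (Hb : gam lam (s 0%nat) <= pi_sym lam s <= gam lam (s 0%nat) + lam (s 0%nat))
    by (rewrite E; nra).
  pose proof (Hveq (s 0%nat) (Hs 0%nat) _ Hb) as Hv.
  replace ((pi_sym lam s - gam lam (s 0%nat)) / lam (s 0%nat)) with (pi_sym lam (shift 1 s)) in Hv;
    [exact Hv|]. rewrite E; field; lra.
Qed.

Lemma v_pi_iter k s : in_Sigma N s ->
  veq d (v (pi_sym lam s)) (fw d A t (restr s k) (v (pi_sym lam (shift k s)))).
Proof.
  revert s. induction k as [|k IH]; intros s Hs; [rewrite shift_0; apply veq_refl|].
  rewrite restr_S. simpl fw. eapply veq_trans; [apply (v_pi_step s Hs)|].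
  rewrite (faff_ext d A t (s 0%nat) _ _ (IH (shift 1 s) (in_Sigma_shift N s 1 Hs))), shift_shift.
  apply veq_refl.
Qed.

Hypothesis Hcontr : forall i, (i < N)%nat -> contraction d (faff d A t i).
Hypothesis Hvc : v_continuous d v.

Lemma Pi_sym_veq_v_pi s : in_Sigma N s -> veq d (Pi_sym d A t s) (v (pi_sym lam s)).
Proof.
  intros Hs. apply Pi_sym_veq_limit. intros eps Heps.
  destruct (uniform_contraction d N A t Hcontr) as [c [Hc HcA]].
  destruct (v_bounded d v Hvc) as [Bv HBv].
  assert (HB : 0 < Rabs Bv + 1) by (pose proof (Rabs_pos Bv); lra).
  destruct (pow_lt_1_zero c ltac:(rewrite Rabs_pos_eq; lra) (eps / (Rabs Bv + 1))) as [n0 Hn0];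
    [apply Rdiv_lt_0_compat; lra|].
  exists n0; intros n Hn.
  rewrite (norm_ext d _ _ (vsub_veq d _ _ _ _ (veq_refl d _) (v_pi_iter n s Hs))).
  rewrite (norm_ext d _ _ (fw_vsub d A t _ _ _)).
  eapply Rle_lt_trans; [apply (norm_matw_le d N A c (proj1 Hc) HcA _ (restr_Forall N s n Hs))|].
  rewrite restr_length, norm_vsub_zero_l.
  specialize (HBv _ (pi_range N lam Hlam _ (in_Sigma_shift N s n Hs))).
  specialize (Hn0 n Hn). rewrite Rabs_pos_eq in Hn0 by (apply pow_le; lra).
  pose proof (pow_le c n (proj1 Hc)). pose proof (Rle_abs Bv).
  apply Rle_lt_trans with (c ^ n * (Rabs Bv + 1)); [nra|].
  apply Rmult_lt_compat_r with (r := Rabs Bv + 1) in Hn0; [|lra].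
  replace (eps / (Rabs Bv + 1) * (Rabs Bv + 1)) with eps in Hn0 by (field; lra). exact Hn0.
Qed.

Lemma v_pi_sub_v_pi_cat_seq k s j : in_Sigma N s -> in_Sigma N j ->
  veq d (vsub (v (pi_sym lam s)) (v (pi_sym lam (cat_seq k s j))))
        (matvec d (matw d A (restr s k)) (vsub (Pi_sym d A t (shift k s)) (Pi_sym d A t j))).
Proof.
  intros Hs Hj. assert (Hc : in_Sigma N (cat_seq k s j)) by (apply in_Sigma_cat_seq; auto).
  pose proof (v_pi_iter k s Hs) as E1. pose proof (v_pi_iter k _ Hc) as E2.
  rewrite restr_cat_seq, shift_cat_seq in E2.
  eapply veq_trans; [apply (vsub_veq d _ _ _ _ E1 E2)|].
  eapply veq_trans; [apply fw_vsub|].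
  rewrite (matvec_ext d _ _ (vsub (Pi_sym d A t (shift k s)) (Pi_sym d A t j))); [apply veq_refl|].
  apply vsub_veq; apply veq_sym, Pi_sym_veq_v_pi; auto. apply in_Sigma_shift, Hs.
Qed.

End Coding.

(** * Compactness *)

Definition strictly_increasing (f : nat -> nat) : Prop := forall m, (f m < f (S m))%nat.

Lemma strictly_increasing_ge f : strictly_increasing f -> forall m, (m <= f m)%nat.
Proof. intros H m; induction m as [|m IH]; [lia|]. specialize (H m). lia. Qed.

Lemma strictly_increasing_comp f g :
  strictly_increasing f -> strictly_increasing g -> strictly_increasing (fun m => f (g m)).
Proof.
  intros Hf Hg m. specialize (Hg m).
  induction Hg as [|n Hn IH]; [apply Hf|]. specialize (Hf n). lia.
Qed.

Lemma Un_cv_subseq u l f : strictly_increasing f -> Un_cv u l -> Un_cv (fun m => u (f m)) l.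
Proof.
  intros Hf H eps Heps. destruct (H eps Heps) as [n0 Hn0]. exists n0. intros n Hn.
  apply Hn0. pose proof (strictly_increasing_ge f Hf n). lia.
Qed.

Lemma Rinv_INR_S_small eps : 0 < eps -> exists n0, forall m, (n0 <= m)%nat -> / (INR m + 1) < eps.
Proof.
  intros H. destruct (archimed_cor1 eps H) as [n0 [Hn0 Hpos]]. exists n0. intros m Hm.
  apply Rle_lt_trans with (/ INR n0); auto. apply Rinv_le_contravar; [apply lt_0_INR; auto|].
  apply le_INR in Hm. lra.
Qed.

Lemma bounded_seq_cv_subseq (u : nat -> R) B : (forall n, Rabs (u n) <= B) ->
  exists f l, strictly_increasing f /\ Un_cv (fun m => u (f m)) l.
Proof.
  intros Hb.
  destruct (Bolzano_Weierstrass u (fun c => -B <= c <= B) (compact_P3 (-B) B)) as [l Hl];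
    [intros n; apply Rabs_le_between, Hb|].
  assert (Hnear : forall n0 m, exists p, (n0 <= p)%nat /\ Rabs (u p - l) < / (INR m + 1)).
  { intros n0 m. assert (He : 0 < / (INR m + 1)) by (apply Rinv_0_lt_compat; pose proof (pos_INR m); lra).
    destruct (Hl (disc l (mkposreal _ He)) n0) as [p [Hp Hv]];
      [exists (mkposreal _ He); intros y Hy; exact Hy|].
    exists p; split; auto. }
  set (pick := fun n0 m => epsilon (inhabits 0%nat)
                 (fun p => (n0 <= p)%nat /\ Rabs (u p - l) < / (INR m + 1))).
  assert (Hpick : forall n0 m, (n0 <= pick n0 m)%nat /\ Rabs (u (pick n0 m) - l) < / (INR m + 1))
    by (intros; apply epsilon_spec, Hnear).
  set (f := fix f m := match m with O => pick 0%nat 0%nat | S m => pick (S (f m)) (S m) end).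
  exists f, l. split; [intros m; simpl; apply Hpick|].
  intros eps He. destruct (Rinv_INR_S_small eps He) as [n0 Hn0]. exists n0. intros n Hn.
  unfold Rdist. apply Rlt_trans with (/ (INR n + 1)); [destruct n; simpl; apply Hpick|apply Hn0; lia].
Qed.

Lemma bounded_vseq_cv_subseq d (x : nat -> vec) B :
  (forall n k, (k < d)%nat -> Rabs (x n k) <= B) ->
  exists f L, strictly_increasing f /\
    forall eps, eps > 0 -> exists n0, forall m, (n0 <= m)%nat -> norm d (vsub (x (f m)) L) < eps.
Proof.
  intros Hb.
  assert (Hcoord : forall j, (j <= d)%nat -> exists f L, strictly_increasing f /\
            forall k, (k < j)%nat -> Un_cv (fun m => x (f m) k) (L k)).
  { induction j as [|j IH]; intros Hj.
    - exists (fun m => m), vzero. split; [intros m; lia|intros; lia].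
    - destruct (IH ltac:(lia)) as [f [L [Hf HL]]].
      destruct (bounded_seq_cv_subseq (fun m => x (f m) j) B) as [g [l [Hg Hl]]];
        [intros; apply Hb; lia|].
      exists (fun m => f (g m)), (fun k => if Nat.eqb k j then l else L k).
      split; [apply strictly_increasing_comp; auto|].
      intros k Hk. destruct (Nat.eqb_spec k j) as [->|Hne]; [exact Hl|].
      apply (Un_cv_subseq (fun m => x (f m) k)); auto. apply HL; lia. }
  destruct (Hcoord d (le_n _)) as [f [L [Hf HL]]]. exists f, L. split; auto.
  assert (Hsum : forall j, (j <= d)%nat -> forall eps, eps > 0 -> exists n0, forall m, (n0 <= m)%nat ->
            rsum j (fun k => Rabs (vsub (x (f m)) L k)) < eps).
  { induction j as [|j IH]; intros Hj eps He; [exists 0%nat; intros; simpl; lra|].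
    destruct (IH ltac:(lia) (eps/2) ltac:(lra)) as [n1 H1].
    destruct (HL j ltac:(lia) (eps/2) ltac:(lra)) as [n2 H2].
    exists (max n1 n2). intros m Hm. simpl.
    specialize (H1 m ltac:(lia)). specialize (H2 m ltac:(lia)). unfold Rdist in H2. unfold vsub at 2. lra. }
  intros eps He. destruct (Hsum d (le_n _) eps He) as [n0 H0]. exists n0. intros m Hm.
  eapply Rle_lt_trans; [apply norm_le_rsum_Rabs|auto].
Qed.

(** * Cones *)

Lemma popen_veq d M x y : popen d M -> M x -> veq d x y -> M y.
Proof.
  intros [_ Ho] Hx Hv. destruct (Ho x Hx) as [e [He Hb]]. apply Hb.
  rewrite (veq_norm_vsub_eq0 d y x (veq_sym d x y Hv)). lra.
Qed.

Lemma popen_pclos d M u : popen d M -> M u -> pclos d M u.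
Proof.
  intros [[Hpos _] _] Hu. split; [apply Hpos; auto|]. intros eps He. exists u. split; auto.
  rewrite veq_norm_vsub_eq0 by apply veq_refl. lra.
Qed.

Lemma pint_in d M z : pint d M z -> M z.
Proof. intros [e [He H]]. apply H. rewrite veq_norm_vsub_eq0 by apply veq_refl. lra. Qed.

Lemma matw_cone_stable d N A M : popen d M ->
  (forall i, (i < N)%nat -> forall w, pclos d M w -> pint d M (matvec d (A i) w)) ->
  forall w, Forall (fun i => (i < N)%nat) w -> forall q, M q -> M (matvec d (matw d A w) q).
Proof.
  intros HM Hi w Hw. induction Hw as [|i w Hiw Hw IH]; intros q Hq.
  - eapply popen_veq; eauto. apply veq_sym, matvec_idm.
  - rewrite matvec_matw_cons. apply (pint_in d), Hi, popen_pclos; auto.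
Qed.

(* By compactness of the unit sphere of [closure M], one radius serves all unit vectors of [M]. *)
Lemma image_unit_ball_uniform d M (Ai : mat) :
  (forall w, pclos d M w -> pint d M (matvec d Ai w)) ->
  exists rho, 0 < rho /\
    forall u, M u -> norm d u = 1 -> forall z, norm d (vsub z (matvec d Ai u)) < rho -> M z.
Proof.
  intros Hp. apply NNPP. intros Hn.
  assert (Hbad : forall n : nat, exists u, M u /\ norm d u = 1 /\
            exists z, norm d (vsub z (matvec d Ai u)) < / (INR n + 1) /\ ~ M z).
  { intros n. apply NNPP; intros Hu. apply Hn. exists (/ (INR n + 1)).
    split; [apply Rinv_0_lt_compat; pose proof (pos_INR n); lra|].
    intros u Hu1 Hu2 z Hz. apply NNPP; intros HMz. apply Hu. exists u. repeat split; auto. exists z; auto. }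
  destruct (choice _ Hbad) as [U HU].
  destruct (bounded_vseq_cv_subseq d U 1) as [f [L [Hf HL]]].
  { intros n k Hk. destruct (HU n) as [_ [H1 _]]. rewrite <- H1. apply Rabs_coord_le_norm; auto. }
  assert (HnL : norm d L = 1).
  { destruct (Req_dec (norm d L) 1) as [|Hne]; auto. exfalso.
    destruct (HL (Rabs (norm d L - 1))) as [n0 Hn0]; [apply Rabs_pos_lt; lra|].
    specialize (Hn0 n0 (le_n _)). pose proof (norm_rev_triang d (U (f n0)) L) as Htri.
    destruct (HU (f n0)) as [_ [H1 _]]. rewrite H1, Rabs_minus_sym in Htri. lra. }
  assert (HcL : pclos d M L).
  { split; [lra|]. intros eps He. destruct (HL eps He) as [n0 Hn0].
    exists (U (f n0)). split; [apply HU|apply Hn0; lia]. }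
  destruct (Hp L HcL) as [e0 [He0 Hball]].
  destruct (matvec_small d Ai (e0/2) ltac:(lra)) as [del [Hdel Hsmall]].
  destruct (HL del Hdel) as [n1 Hn1].
  destruct (Rinv_INR_S_small (e0/2) ltac:(lra)) as [n2 Hn2].
  set (m := max n1 n2).
  destruct (HU (f m)) as [_ [_ [z [Hz HMz]]]]. apply HMz, Hball.
  eapply Rle_lt_trans; [apply (norm_vsub_triang d z (matvec d Ai (U (f m))))|].
  rewrite <- matvec_vsub. specialize (Hn1 m ltac:(lia)).
  pose proof (strictly_increasing_ge f Hf m). specialize (Hn2 (f m) ltac:(lia)).
  specialize (Hsmall _ Hn1). lra.
Qed.

Lemma image_ball_of_unit_ball d M (Ai : mat) rho : popen d M ->
  (forall u, M u -> norm d u = 1 -> forall z, norm d (vsub z (matvec d Ai u)) < rho -> M z) ->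
  forall u, M u -> forall z, norm d (vsub z (matvec d Ai u)) < rho * norm d u -> M z.
Proof.
  intros [[Hpos Hsc] _] Hr u Hu z Hz.
  set (nu := norm d u). assert (Hnu : 0 < nu) by (apply Hpos; auto).
  assert (Hinv : 0 < / nu) by (apply Rinv_0_lt_compat; lra).
  assert (H1 : M (scal (/ nu) u)) by (apply Hsc; auto; lra).
  assert (H2 : norm d (scal (/ nu) u) = 1)
    by (rewrite norm_scal, Rabs_pos_eq by lra; fold nu; field; lra).
  assert (H3 : M (scal (/ nu) z)).
  { apply (Hr _ H1 H2). rewrite matvec_scal, vsub_scal, norm_scal, Rabs_pos_eq by lra.
    apply Rmult_lt_reg_l with nu; auto. rewrite <- Rmult_assoc, Rinv_r, Rmult_1_l by lra.
    unfold nu in *; lra. }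
  replace z with (scal nu (scal (/ nu) z)); [apply Hsc; auto; lra|].
  apply functional_extensionality; intros; unfold scal; field; lra.
Qed.

Lemma cone_image_ball_uniform d N A M : popen d M ->
  (forall i, (i < N)%nat -> forall w, pclos d M w -> pint d M (matvec d (A i) w)) ->
  exists rho, 0 < rho /\ forall i, (i < N)%nat -> forall u, M u ->
    forall z, norm d (vsub z (matvec d (A i) u)) < rho * norm d u -> M z.
Proof.
  intros HM Hint.
  destruct (finite_uniform_pos N (fun i rho => forall u, M u -> norm d u = 1 ->
              forall z, norm d (vsub z (matvec d (A i) u)) < rho -> M z)) as [rho [Hrho Hr]].
  - intros i c c' H [Hc' Hcc] u Hu Hu1 z Hz. apply (H u Hu Hu1 z). lra.
  - intros i Hi. apply (image_unit_ball_uniform d M (A i)), Hint, Hi.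
  - exists rho. split; auto. intros i Hi. exact (image_ball_of_unit_ball d M (A i) rho HM (Hr i Hi)).
Qed.

Lemma ball_dot_lb d (M : vec -> Prop) b z0 r : 0 < r -> (forall z, M z -> dot d b z <> 0) ->
  (forall z, norm d (vsub z z0) < r -> M z) -> r * norm d b <= Rabs (dot d b z0).
Proof.
  intros Hr Hb Hball. destruct (Rle_lt_dec (r * norm d b) (Rabs (dot d b z0))) as [|Hlt]; auto.
  exfalso.
  assert (Hnb : 0 < norm d b) by (pose proof (Rabs_pos (dot d b z0)); pose proof (norm_nonneg d b); nra).
  assert (Hbb : dot d b b = norm d b * norm d b) by (symmetry; apply norm_sqr).
  set (beta := dot d b z0 / dot d b b).
  apply (Hb (vsub z0 (scal beta b))); [apply Hball|].
  - replace (vsub (vsub z0 (scal beta b)) z0) with (scal (- beta) b)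
      by (apply functional_extensionality; intros; unfold vsub, scal; ring).
    rewrite norm_scal, Rabs_Ropp. unfold beta, Rdiv.
    rewrite Rabs_mult, Rabs_inv, Hbb, (Rabs_pos_eq (_ * _)) by nra.
    apply Rmult_lt_reg_l with (norm d b); auto.
    replace (norm d b * (Rabs (dot d b z0) * / (norm d b * norm d b) * norm d b))
      with (Rabs (dot d b z0)) by (field; lra). lra.
  - rewrite dot_sym, dot_vsub_l, dot_scal_l. unfold beta. rewrite (dot_sym d z0 b).
    field. rewrite Hbb; nra.
Qed.

Definition vecmat d (a : vec) (B : mat) : vec := fun k => rsum d (fun j => a j * B j k).

Lemma dot_matvec d a B z : dot d a (matvec d B z) = dot d (vecmat d a B) z.
Proof.
  unfold dot, matvec, vecmat. transitivity (rsum d (fun j => rsum d (fun k => a j * B j k * z k))).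
  - apply rsum_ext; intros. rewrite <- rsum_scal. apply rsum_ext; intros; ring.
  - rewrite rsum_swap. apply rsum_ext; intros. rewrite Rmult_comm, <- rsum_scal.
    apply rsum_ext; intros; ring.
Qed.

Section ConeComparability.

Variables (d N : nat) (A : nat -> mat) (M : vec -> Prop).
Hypothesis HM : popen d M.
Hypothesis Hinto : forall i, (i < N)%nat -> forall w, pclos d M w -> pint d M (matvec d (A i) w).
Hypothesis Hnonexp : forall i, (i < N)%nat -> forall x, norm d (matvec d (A i) x) <= norm d x.
Variables (rho : R) (a u0 : vec) (r0 : R).
Hypothesis Hrho : 0 < rho.
Hypothesis Hrho_ball : forall i, (i < N)%nat -> forall u, M u ->
  forall z, norm d (vsub z (matvec d (A i) u)) < rho * norm d u -> M z.
Hypothesis Ha : forall z, M z -> dot d a z <> 0.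
Hypothesis Hr0 : 0 < r0.
Hypothesis Hball0 : forall y, norm d (vsub y u0) < r0 -> M y.

Lemma cone_norm_pos z : M z -> 0 < norm d z.
Proof. apply (proj1 (proj1 HM)). Qed.

Lemma transverse_norm_pos : 0 < norm d a.
Proof.
  assert (Hu0 : M u0) by (apply Hball0; rewrite veq_norm_vsub_eq0 by apply veq_refl; lra).
  pose proof (cauchy_schwarz d a u0). pose proof (Ha u0 Hu0). pose proof (norm_nonneg d u0).
  pose proof (Rabs_pos_lt _ (Ha u0 Hu0)). pose proof (norm_nonneg d a).
  destruct (Req_dec (norm d a) 0) as [E|E]; [rewrite E in *; lra|lra].
Qed.

(* Images of the cone lie uniformly inside it, so [a] is comparable to the norm there. *)
Lemma transverse_dot_matw_lb W : W <> nil -> Forall (fun i => (i < N)%nat) W -> forall m, M m ->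
  rho * norm d a * norm d (matvec d (matw d A W) m) <= Rabs (dot d a (matvec d (matw d A W) m)).
Proof.
  intros HW HWf m Hm. destruct W as [|j W]; [congruence|].
  inversion_clear HWf as [|? ? Hj HW'].
  rewrite matvec_matw_cons. set (m' := matvec d (matw d A W) m).
  assert (Hm' : M m') by (apply (matw_cone_stable d N A M HM Hinto); auto).
  pose proof (cone_norm_pos m' Hm'). pose proof (norm_nonneg d a). pose proof (Hnonexp j Hj m').
  apply Rle_trans with (rho * norm d a * norm d m');
    [apply Rmult_le_compat_l; [nra|auto]|rewrite Rmult_assoc, (Rmult_comm (norm d a)), <- Rmult_assoc].
  apply (ball_dot_lb d M); [nra|exact Ha|]. intros z Hz. apply (Hrho_ball j Hj m'); auto.
Qed.

Section Splitting.

Variables (w : word) (i : nat).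
Hypothesis Hw : Forall (fun i => (i < N)%nat) w.
Hypothesis Hi : (i < N)%nat.

Let W := w ++ i :: nil.
Let b := vecmat d a (matw d A w).

Lemma dot_matw_snoc x : dot d a (matvec d (matw d A W) x) = dot d b (matvec d (A i) x).
Proof.
  unfold b. rewrite <- dot_matvec. apply dot_ext; [apply veq_refl|].
  eapply veq_trans; [apply matvec_matw_app|].
  rewrite (matvec_ext d _ _ _ (matvec_matw_single d A i x)). apply veq_refl.
Qed.

Lemma vecmat_nonvanishing z : M z -> dot d b z <> 0.
Proof. intros Hz. unfold b. rewrite <- dot_matvec. apply Ha, (matw_cone_stable d N A M); auto. Qed.

Lemma norm_vecmat_lb q : M q -> rho * norm d q * norm d b <= norm d a * norm d (matvec d (matw d A W) q).
Proof.
  intros Hq. pose proof (cone_norm_pos q Hq).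
  eapply Rle_trans; [apply (ball_dot_lb d M b (matvec d (A i) q)); [nra|apply vecmat_nonvanishing|]|].
  - intros z Hz. apply (Hrho_ball i Hi q); auto.
  - rewrite <- dot_matw_snoc. apply cauchy_schwarz.
Qed.

Lemma norm_matw_snoc_ub m : M m -> rho * norm d a * norm d (matvec d (matw d A W) m) <= norm d b * norm d m.
Proof.
  intros Hm. eapply Rle_trans; [apply transverse_dot_matw_lb; auto|].
  - unfold W; destruct w; discriminate.
  - apply Forall_app; auto.
  - rewrite dot_matw_snoc. eapply Rle_trans; [apply cauchy_schwarz|].
    apply Rmult_le_compat_l; [apply norm_nonneg|apply Hnonexp; auto].
Qed.

Let C0 := 2 / r0 * (2 * norm d u0 + r0 / 2).

(* A unit vector [x] is [(2 / r0) (m1 - u0)] with [m1, u0] in the ball around [u0]. *)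
Lemma opnorm_matw_snoc_le : opnorm d (matw d A W) * (rho * norm d a) <= norm d b * C0.
Proof.
  pose proof transverse_norm_pos. pose proof (norm_nonneg d b). pose proof (norm_nonneg d u0).
  assert (Hra : 0 < rho * norm d a) by nra. assert (H2r : 0 < 2 / r0) by (apply Rdiv_lt_0_compat; lra).
  rewrite Rmult_comm. apply Rmult_le_reg_l with (/ (rho * norm d a)); [apply Rinv_0_lt_compat; lra|].
  rewrite <- Rmult_assoc, Rinv_l, Rmult_1_l by lra.
  apply opnorm_le. intros x Hx. set (m1 := vadd u0 (scal (r0/2) x)).
  assert (Hm1u0 : vsub m1 u0 = scal (r0/2) x)
    by (apply functional_extensionality; intros; unfold m1, vsub, vadd, scal; ring).
  assert (Hm1 : M m1) by (apply Hball0; rewrite Hm1u0, norm_scal, Rabs_pos_eq by lra; nra).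
  assert (Hu0 : M u0) by (apply Hball0; rewrite veq_norm_vsub_eq0 by apply veq_refl; lra).
  assert (Hnm1 : norm d m1 <= norm d u0 + r0/2)
    by (eapply Rle_trans; [apply norm_triang|]; rewrite norm_scal, Rabs_pos_eq by lra; nra).
  replace x with (scal (2 / r0) (vsub m1 u0))
    by (rewrite Hm1u0; apply functional_extensionality; intros; unfold scal; field; lra).
  rewrite matvec_scal, matvec_vsub, norm_scal, Rabs_pos_eq by lra.
  pose proof (norm_matw_snoc_ub m1 Hm1). pose proof (norm_matw_snoc_ub u0 Hu0).
  pose proof (norm_vsub_le d (matvec d (matw d A W) m1) (matvec d (matw d A W) u0)).
  apply Rmult_le_reg_l with (rho * norm d a); [lra|].
  replace (rho * norm d a * (/ (rho * norm d a) * (norm d b * C0))) with (norm d b * C0)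
    by (field; lra).
  unfold C0. rewrite (Rmult_comm (rho * norm d a)), Rmult_assoc,
    (Rmult_comm (norm d b)), Rmult_assoc.
  apply Rmult_le_compat_l; [lra|].
  apply Rle_trans with (rho * norm d a * norm d (matvec d (matw d A W) m1)
                        + rho * norm d a * norm d (matvec d (matw d A W) u0)); [nra|].
  nra.
Qed.

Lemma opnorm_matw_snoc_cone_le q : M q ->
  opnorm d (matw d A W) * norm d q <= C0 / (rho * rho) * norm d (matvec d (matw d A W) q).
Proof.
  intros Hq. pose proof transverse_norm_pos. pose proof (cone_norm_pos q Hq).
  pose proof opnorm_matw_snoc_le. pose proof (norm_vecmat_lb q Hq). pose proof (norm_nonneg d b).
  assert (HC0 : 0 <= C0) by (unfold C0; pose proof (norm_nonneg d u0);
    assert (0 < 2 / r0) by (apply Rdiv_lt_0_compat; lra); nra).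
  apply Rmult_le_reg_r with (rho * norm d a * rho); [apply Rmult_lt_0_compat; nra|].
  replace (C0 / (rho * rho) * norm d (matvec d (matw d A W) q) * (rho * norm d a * rho))
    with (C0 * (norm d a * norm d (matvec d (matw d A W) q))) by (field; lra).
  apply Rle_trans with (norm d b * C0 * (rho * norm d q)); [|nra].
  replace (opnorm d (matw d A W) * norm d q * (rho * norm d a * rho))
    with (opnorm d (matw d A W) * (rho * norm d a) * (rho * norm d q)) by ring.
  apply Rmult_le_compat_r; nra.
Qed.

End Splitting.

End ConeComparability.

Lemma dominated_splitting_opnorm_bound d N A M : dominated_splitting d N A M ->
  (forall i, (i < N)%nat -> forall x, norm d (matvec d (A i) x) <= norm d x) ->
  exists K, 0 < K /\ forall W, W <> nil -> Forall (fun i => (i < N)%nat) W ->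
    forall q, M q -> opnorm d (matw d A W) * norm d q <= K * norm d (matvec d (matw d A W) q).
Proof.
  intros [HM [[u0 Hu0] [_ [Hinto [a [_ Ha]]]]]] Hnonexp.
  destruct (proj2 HM u0 Hu0) as [r0 [Hr0 Hball0]].
  destruct (cone_image_ball_uniform d N A M HM Hinto) as [rho [Hrho Hrho_ball]].
  assert (Ha' : forall z, M z -> dot d a z <> 0) by (intros; apply Ha, popen_pclos; auto).
  exists (2 / r0 * (2 * norm d u0 + r0 / 2) / (rho * rho)). split.
  - pose proof (norm_nonneg d u0). apply Rdiv_lt_0_compat; [|nra].
    apply Rmult_lt_0_compat; [apply Rdiv_lt_0_compat|]; lra.
  - intros W HW HWf q Hq. destruct (exists_last HW) as [w [i ->]].
    apply Forall_app in HWf. destruct HWf as [Hw Hi]. inversion_clear Hi.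
    apply (opnorm_matw_snoc_cone_le d N A M HM Hinto Hnonexp rho a u0 r0); auto.
Qed.

Lemma zipper_two_letters d N A t z : (forall i, (i < N)%nat -> contraction d (faff d A t i)) ->
  (forall i, (i < N)%nat -> veq d (faff d A t i (z 0%nat)) (z i) /\ veq d (faff d A t i (z N)) (z (S i))) ->
  ~ veq d (z N) (z 0%nat) -> (1 <= N)%nat -> (2 <= N)%nat.
Proof.
  intros Hc Hz Hne H1. destruct (Nat.eq_dec N 1) as [E|E]; [|lia]. exfalso. subst N.
  destruct (Hz 0%nat ltac:(lia)) as [Z0 Z1]. destruct (Hc 0%nat ltac:(lia)) as [c [Hc1 Hc2]].
  specialize (Hc2 (z 1%nat) (z 0%nat)).
  rewrite (norm_ext d _ (vsub (z 1%nat) (z 0%nat)) (vsub_veq d _ _ _ _ Z1 Z0)) in Hc2.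
  apply Hne, norm_vsub_eq0_veq. pose proof (norm_nonneg d (vsub (z 1%nat) (z 0%nat))). nra.
Qed.

Lemma not_in_B_far_points d N A t M s : ~ in_B d N A t M s ->
  exists n, (1 <= n)%nat /\ forall K0, exists k, (K0 <= k)%nat /\
    exists y, Gam d N A t y /\ Mx d M (Pi_sym d A t (shift k s)) y /\
      / INR n <= norm d (vsub y (Pi_sym d A t (shift k s))).
Proof.
  intros HnB. apply NNPP; intros Hno. apply HnB. intros n l m Hn _ _.
  apply NNPP; intros Hev. apply Hno. exists n. split; auto. intros K0.
  apply NNPP; intros Hk. apply Hev. exists K0. intros k HK0.
  unfold Bnlm; cbv zeta. intros [y [[Hy Hfar] [HGy _]]].
  apply Hk. exists k. split; auto. exists y. split; [exact HGy|split; [exact Hy|]].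
  apply Rnot_lt_le, Hfar.
Qed.

Lemma ln_ratio_lt op C D dist lw r eps :
  0 < eps -> 0 < C -> 0 < op <= 1 -> 0 < dist <= lw -> lw < 1 -> lw < exp (- ln C / eps) ->
  ln op / ln lw <= r -> op / C <= D -> ln D / ln dist < r + eps.
Proof.
  intros Heps HC Hop Hdist Hlw1 Hlwe Hr HD.
  assert (Hllw : ln lw < 0) by (rewrite <- ln_1; apply ln_increasing; lra).
  assert (Hld : ln dist <= ln lw) by (apply ln_le; lra).
  assert (Hlop : ln op <= 0) by (rewrite <- ln_1; apply ln_le; lra).
  assert (Hrop : r * ln lw <= ln op).
  { apply Rmult_le_compat_r with (r := - ln lw) in Hr; [|lra].
    replace (ln op / ln lw * - ln lw) with (- ln op) in Hr by (field; lra). lra. }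
  assert (Hr0 : 0 <= r).
  { eapply Rle_trans; [|exact Hr]. replace (ln op / ln lw) with ((- ln op) * / (- ln lw)) by (field; lra).
    apply Rmult_le_pos; [lra|left; apply Rinv_0_lt_compat; lra]. }
  assert (HlC : eps * ln lw < - ln C).
  { apply ln_increasing in Hlwe; [|lra]. rewrite ln_exp in Hlwe.
    apply Rmult_lt_compat_l with (r := eps) in Hlwe; [|lra].
    replace (eps * (- ln C / eps)) with (- ln C) in Hlwe by (field; lra). exact Hlwe. }
  assert (HlD : ln op - ln C <= ln D).
  { assert (0 < op / C) by (apply Rdiv_lt_0_compat; lra).
    replace (ln op - ln C) with (ln (op / C))
      by (unfold Rdiv; rewrite ln_mult, ln_Rinv by (try apply Rinv_0_lt_compat; lra); ring).
    apply ln_le; lra. }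
  assert ((r + eps) * ln dist <= (r + eps) * ln lw) by (apply Rmult_le_compat_l; lra).
  apply Rmult_lt_reg_r with (- ln dist); [lra|].
  replace (ln D / ln dist * - ln dist) with (- ln D) by (field; lra). nra.
Qed.

Section FarPoint.

Variables (d N : nat) (A : nat -> mat) (t : nat -> vec) (lam : nat -> R) (v : R -> vec)
  (M : vec -> Prop).
Hypothesis Hcontr : forall i, (i < N)%nat -> contraction d (faff d A t i).
Hypothesis Hlam : prob_vector N lam.
Hypothesis Hvc : v_continuous d v.
Hypothesis Hveq : v_equation d N A t lam v.
Hypothesis HM : popen d M.
Hypothesis Hinto : forall i, (i < N)%nat -> forall w, pclos d M w -> pint d M (matvec d (A i) w).
Variable K : R.
Hypothesis HK : forall W, W <> nil -> Forall (fun i => (i < N)%nat) W ->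
  forall q, M q -> opnorm d (matw d A W) * norm d q <= K * norm d (matvec d (matw d A W) q).
Hypothesis HKpos : 0 < K.

Lemma far_point_displacement s k n y : in_Sigma N s -> (1 <= k)%nat -> (1 <= n)%nat ->
  Gam d N A t y -> Mx d M (Pi_sym d A t (shift k s)) y ->
  / INR n <= norm d (vsub y (Pi_sym d A t (shift k s))) ->
  exists x', 0 <= x' <= 1 /\ 0 < Rabs (pi_sym lam s - x') <= lamw lam (restr s k) /\
    0 < opnorm d (matw d A (restr s k)) /\
    opnorm d (matw d A (restr s k)) / (K * INR n) <= norm d (vsub (v (pi_sym lam s)) (v x')).
Proof.
  intros Hs Hk Hn [j [Hj Hyj]] [_ HMq] Hfar.
  set (P := Pi_sym d A t (shift k s)) in *. set (q := vsub y P) in *.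
  set (w := restr s k). set (op := opnorm d (matw d A w)).
  assert (Hw : Forall (fun i => (i < N)%nat) w) by apply restr_Forall, Hs.
  assert (Hwne : w <> nil) by (unfold w; destruct k; [lia|rewrite restr_S; discriminate]).
  assert (HD : norm d (vsub (v (pi_sym lam s)) (v (pi_sym lam (cat_seq k s j))))
               = norm d (matvec d (matw d A w) q)).
  { rewrite (norm_ext d _ _ (v_pi_sub_v_pi_cat_seq d N A t lam v Hlam Hveq Hcontr Hvc k s j Hs Hj)).
    rewrite (matvec_ext d _ _ (vsub P y)) by (apply vsub_veq; [apply veq_refl|apply veq_sym, Hyj]).
    unfold q. rewrite !matvec_vsub. apply norm_vsub_sym. }
  assert (HAq : 0 < norm d (matvec d (matw d A w) q))
    by (apply (proj1 (proj1 HM)), (matw_cone_stable d N A M HM Hinto); auto).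
  pose proof (norm_matvec_le_opnorm d (matw d A w) q). pose proof (norm_nonneg d q).
  assert (Hop : 0 < op) by (unfold op; destruct (Rle_lt_dec (opnorm d (matw d A w)) 0); nra).
  pose proof (HK w Hwne Hw q HMq) as HKq. fold op in HKq.
  assert (HnR : 0 < INR n) by (apply lt_0_INR; lia).
  exists (pi_sym lam (cat_seq k s j)). repeat split.
  - apply (pi_range N lam Hlam), in_Sigma_cat_seq; auto.
  - apply (pi_range N lam Hlam), in_Sigma_cat_seq; auto.
  - apply Rabs_pos_lt. intros E. apply Rminus_diag_uniq in E. rewrite <- E in HD.
    rewrite veq_norm_vsub_eq0 in HD by apply veq_refl. lra.
  - apply (Rabs_pi_sub_pi_cat_seq N lam Hlam); auto.
  - exact Hop.
  - rewrite HD. apply Rmult_le_reg_r with (K * INR n); [nra|].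
    unfold Rdiv. rewrite Rmult_assoc, Rinv_l, Rmult_1_r by nra.
    apply Rle_trans with (op * norm d q * INR n); [|nra].
    apply Rmult_le_compat_r with (r := op) in Hfar; [|lra].
    apply Rmult_le_compat_r with (r := INR n) in Hfar; [|lra].
    rewrite (Rmult_comm (/ INR n)), Rmult_assoc, Rinv_l, Rmult_1_r in Hfar by lra. nra.
Qed.

End FarPoint.

Theorem lemma3p3 (d N : nat) (A : nat -> mat) (t : nat -> vec) (z : nat -> vec)
    (lam : nat -> R) (M : vec -> Prop) (v : R -> vec)
    (HA : forall i, (i < N)%nat -> invertible d (A i))
    (Hcontr : forall i, (i < N)%nat -> contraction d (faff d A t i))
    (Hzip : forall i, (i < N)%nat ->
       veq d (faff d A t i (z 0%nat)) (z i) /\ veq d (faff d A t i (z N)) (z (S i)))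
    (Hnd : nondegenerate d N A t z M)
    (Hdom : dominated_splitting d N A M)
    (Hlam : prob_vector N lam)
    (Hvc : v_continuous d v)
    (Hveq : v_equation d N A t lam v) :
  forall s, in_Sigma N s -> ~ in_B d N A t M s ->
  forall r, (exists n0, forall n, (n0 <= n)%nat ->
               ln (opnorm d (matw d A (restr s n))) / ln (lamw lam (restr s n)) <= r) ->
  alpha_le d v (pi_sym lam s) r.
Proof.
  intros s Hs HnB r [n0 Hr] eps delta Heps Hdelta.
  assert (HN : (2 <= N)%nat).
  { apply (zipper_two_letters d N A t z Hcontr Hzip); [apply Hnd|]. specialize (Hs 0%nat). lia. }
  pose proof (linear_parts_nonexpanding d N A t Hcontr) as Hnonexp.
  destruct (dominated_splitting_opnorm_bound d N A M Hdom Hnonexp) as [K [HKpos HK]].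
  destruct (not_in_B_far_points d N A t M s HnB) as [n [Hn Hfar]].
  assert (HnR : 0 < INR n) by (apply lt_0_INR; lia).
  set (theta := Rmin delta (Rmin (exp (- ln (K * INR n) / eps)) (1/2))).
  assert (Htheta : 0 < theta) by (unfold theta; repeat apply Rmin_glb_lt; try lra; apply exp_pos).
  assert (Hth : theta <= delta /\ theta <= exp (- ln (K * INR n) / eps) /\ theta <= 1/2)
    by (unfold theta; repeat split; [apply Rmin_l|eapply Rle_trans; [apply Rmin_r|apply Rmin_l]
                                     |eapply Rle_trans; [apply Rmin_r|apply Rmin_r]]).
  destruct (lamw_restr_uniformly_small N lam Hlam HN theta Htheta) as [K0 HK0].
  destruct (Hfar (max K0 (max n0 1))) as [k [Hk [y [Hy [HMy Hdist]]]]].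
  destruct Hdom as [HM [_ [_ [Hinto _]]]].
  destruct (far_point_displacement d N A t lam v M Hcontr Hlam Hvc Hveq HM Hinto K HK HKpos s k n y)
    as [x' [Hx' [Hxx' [Hop HD]]]]; auto; try lia.
  pose proof (HK0 k s ltac:(lia) Hs).
  pose proof (opnorm_matw_le_1 d N A Hnonexp _ (restr_Forall N s k Hs)).
  exists x'. split; [exact Hx'|]. split; [rewrite Rabs_minus_sym; split; lra|].
  split; [apply (Rlt_le_trans _ _ _ (Rdiv_lt_0_compat _ (K * INR n) Hop ltac:(nra)) HD)|].
  apply (ln_ratio_lt (opnorm d (matw d A (restr s k))) (K * INR n) _ _ (lamw lam (restr s k)));
    [lra|nra|lra|lra|lra|lra|apply Hr; lia|exact HD].
Qed.
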